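(* Let $\mathcal{N}:\mathbf{M}\to\mathbf{P}$ be a natural transformation. For each effect $M\in\mathfrak{E}(A)$ define $\xi(M)=\mathcal{N}_X(\mu)(E)$, where $(X,\Sigma_X)$ is any measurable space, $\mu$ is any POVM on $(X,\Sigma_X)$ and $E\in\Sigma_X$ is any event with $\mu(E)=M$. Then $\xi:\mathfrak{E}(A)\to[0,1]$ is well defined (the value does not depend on the choice of $(X,\Sigma_X),\mu,E$, and such a choice always exists), and $\xi$ is a generalized probability measure on $\mathfrak{E}(A)$.
   Context: Fix a quantum system $A$ with complex separable Hilbert space $\mathcal{H}_A$; $\mathbf{Obs}(A)$ is the space of bounded self-adjoint operators on $\mathcal{H}_A$ and $\mathds{1}$ the identity. $\mathfrak{Meas}$ is the category of measurable spaces and measurable functions; $\mathfrak{Set}$ the category of sets and functions. A POVM on $(X,\Sigma_X)$ is a map $\mu:\Sigma_X\to\mathbf{Obs}(A)$ with $\mu(E)\ge0$, $\mu(X)=\mathds{1}$, and $\mu(\bigsqcup_n E_n)=\sum_n\mu(E_n)$ (weak operator topology) for countable disjoint families. The measurement functor $\mathbf{M}:\mathfrak{Meas}\to\mathfrak{Set}$ sends $(X,\Sigma_X)$ to the set of POVMs on it and a measurable $f:X\to Y$ to $\mu\mapsto f_*\mu$, $(f_*\mu)(F)=\mu(f^{-1}(F))$. The probability functor $\mathbf{P}:\mathfrak{Meas}\to\mathfrak{Set}$ sends $(X,\Sigma_X)$ to the set of probability measures on it and $f$ to pushforward $\mu\mapsto f_*\mu$. A natural transformation $\mathcal{N}:\mathbf{M}\to\mathbf{P}$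 assigns to each measurable space $(X,\Sigma_X)$ a function $\mathcal{N}_X:\mathbf{M}(X,\Sigma_X)\to\mathbf{P}(X,\Sigma_X)$ such that $\mathcal{N}_Y\circ\mathbf{M}(f)=\mathbf{P}(f)\circ\mathcal{N}_X$ for every measurable $f:X\to Y$. The space of effects is $\mathfrak{E}(A)=\{M\in\mathbf{Obs}(A):0\le M\le\mathds{1}\}$. A generalized probability measure is a function $\xi:\mathfrak{E}(A)\to[0,1]$ with $\xi(\mathds{1})=1$ such that for every countable family $\{M_\lambda\}_{\lambda\in\Lambda}\subset\mathfrak{E}(A)$ with $\sum_{\lambda}M_\lambda\le\mathds{1}$ one has $\xi(\sum_\lambda M_\lambda)=\sum_\lambda\xi(M_\lambda)$. *)

From HB Require Import structures.
From mathcomp Require Import all_boot all_order all_algebra.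
From mathcomp Require Import all_classical all_reals all_analysis.
From mathcomp.real_closed Require Import complex.

Set Implicit Arguments.
Unset Strict Implicit.
Unset Printing Implicit Defensive.

Import Order.TTheory GRing.Theory Num.Theory.
Import numFieldNormedType.Exports.
Local Open Scope classical_set_scope.
Local Open Scope ring_scope.

(* The inner product is linear in the first argument, conjugate-linear *)
(* in the second.                                                       *)

Record hilbert (R : realType) := Hilbert {
  hvec :> lmodType R[i];
  inner : hvec -> hvec -> R[i];
  inner_conj : forall x y, inner y x = (inner x y)^*;
  inner_linear : forall (a : R[i]) x y z,
      inner (a *: x + y) z = a * inner x z + inner y z;
  inner_ge0 : forall x, 0 <= inner x x;
  inner_eq0 : forall x, inner x x = 0 -> x = 0;
  inner_complete : forall u : nat -> hvec,
      (forall eps : R, 0 < eps -> exists N : nat, forall m n : nat,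
          (N <= m)%N -> (N <= n)%N ->
          Num.sqrt (complex.Re (inner (u m - u n) (u m - u n))) < eps) ->
      exists l : hvec, forall eps : R, 0 < eps -> exists N : nat, forall n : nat,
          (N <= n)%N -> Num.sqrt (complex.Re (inner (u n - l) (u n - l))) < eps;
  inner_separable : exists e : nat -> hvec, forall (x : hvec) (eps : R), 0 < eps ->
      exists n : nat, Num.sqrt (complex.Re (inner (x - e n) (x - e n))) < eps
}.

Section Operators.
Variables (R : realType) (H : hilbert R).

Definition hnorm (x : H) : R := Num.sqrt (complex.Re (inner x x)).

Definition is_obs (T : H -> H) : Prop :=
  [/\ (forall (a : R[i]) (x y : H), T (a *: x + y) = a *: T x + T y),
      (exists C : R, forall x : H, hnorm (T x) <= C * hnorm x) &
      (forall x y : H, inner (T x) y = inner x (T y))].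

Definition op_ge0 (T : H -> H) : Prop := forall x : H, 0 <= inner (T x) x.

Definition op_le (S T : H -> H) : Prop := forall x : H, inner (S x) x <= inner (T x) x.

Definition is_effect (M : H -> H) : Prop :=
  [/\ is_obs M, op_ge0 M & op_le M id].

Definition cvgC (u : nat -> R[i]) (l : R[i]) : Prop :=
  ((fun n => complex.Re (u n)) @ \oo --> complex.Re l) /\
  ((fun n => complex.Im (u n)) @ \oo --> complex.Im l).

Definition wot_sum (M : nat -> H -> H) (S : H -> H) : Prop :=
  forall x y : H, cvgC (fun N => \sum_(n < N) inner (M n x) y) (inner (S x) y).

(* generalized probability measure on E(A); countable families are
   indexed by nat (finite families: pad with zero effects) *)
Definition is_gen_prob (xi : (H -> H) -> R) : Prop :=
  [/\ (forall M, is_effect M -> 0 <= xi M <= 1),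
      xi id = 1 &
      (forall (M : nat -> H -> H) (S : H -> H),
          (forall n, is_effect (M n)) -> wot_sum M S -> is_effect S ->
          (fun N => \sum_(n < N) xi (M n)) @ \oo --> xi S)].

End Operators.

Record povm (R : realType) (H : hilbert R) (d : measure_display)
    (X : measurableType d) := Povm {
  povm_fun :> set X -> (H -> H);
  povm_obs : forall E, measurable E -> is_obs (povm_fun E);
  povm_ge0 : forall E, measurable E -> op_ge0 (povm_fun E);
  povm_setT : povm_fun setT = id;
  povm_sigma : forall F : nat -> set X, (forall n, measurable (F n)) ->
      trivIset setT F -> wot_sum (fun n => povm_fun (F n)) (povm_fun (\bigcup_n F n))
}.

Definition is_natural (R : realType) (H : hilbert R)
    (N : forall (d : measure_display) (X : measurableType d),
        povm H X -> probability X R) : Prop :=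
  forall (d1 d2 : measure_display) (X : measurableType d1) (Y : measurableType d2)
    (f : X -> Y), measurable_fun setT f ->
  forall (mu : povm H X) (nu : povm H Y),
    povm_fun nu = (fun F => povm_fun mu (f @^-1` F)) ->
    (fun F => N d2 Y nu F) = (fun F => N d1 X mu (f @^-1` F)).

From HB Require Import structures.
From mathcomp Require Import all_boot all_order all_algebra.
From mathcomp Require Import all_classical all_reals all_analysis.
From mathcomp.real_closed Require Import complex.
From mathcomp Require Import ring lra.
Import Order.TTheory GRing.Theory Num.Theory.
Import numFieldNormedType.Exports.
Local Open Scope classical_set_scope.
Local Open Scope ring_scope.

Set Implicit Arguments.
Unset Strict Implicit.
Unset Printing Implicit Defensive.

(* Naturality makes N_X(mu)(E) depend on mu(E) alone: pushing mu forward along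
   the indicator of E gives the two-outcome POVM {0 |-> mu(E), 1 |-> 1 - mu(E)}
   on nat.  This defines xi, and every effect is attained by its own
   two-outcome POVM.  For countable additivity, effects M_n with weak sum S are
   completed by 1 - S to a POVM on nat, whose value on a set F of indices is
   the strong limit of the partial sums over F; it exists by completeness, and
   sigma-additivity of this POVM reduces by polarization to associativity of
   sums of nonnegative reals.  The sigma-additivity of the probability measure
   N of this POVM is then the countable additivity of xi. *)

Lemma in_set1E (T : eqType) (a b : T) : (a \in [set b]) = (a == b).
Proof. by apply/idP/eqP; rewrite in_setE. Qed.

Lemma in_set_predE (T : Type) (P : pred T) a : (a \in [set n | P n]) = P a.
Proof. by apply/idP/idP; rewrite in_setE. Qed.

Lemma big_nat_eq1 (V : zmodType) (f : nat -> V) (k n : nat) : (k < n)%N ->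
  \sum_(0 <= i < n | i == k) f i = f k.
Proof.
move=> kn; rewrite -big_filter filter_pred1_uniq ?big_seq1 //.
  by rewrite /index_iota iota_uniq.
by rewrite mem_index_iota.
Qed.

Lemma big_nat_split_ge (V : zmodType) (f : nat -> V) (P : pred nat) (k m : nat) :
  (k <= m)%N ->
  \sum_(0 <= n < m | P n) f n =
  \sum_(0 <= n < k | P n) f n + \sum_(0 <= n < m | (k <= n)%N && P n) f n.
Proof.
move=> km.
have -> : \sum_(0 <= n < m | (k <= n)%N && P n) f n = \sum_(k <= n < m | P n) f n.
  rewrite (big_cat_nat (leq0n k) km) /= [X in X + _]big_nat_cond big1 ?add0r.
    rewrite big_nat_cond [RHS]big_nat_cond; apply: eq_bigl => i.
    by case: (boolP (k <= i)%N) => //=; rewrite andbT.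
  by move=> i /andP[/andP[_ ik] /andP[ki _]]; rewrite leqNgt ik in ki.
by rewrite (big_cat_nat (leq0n k) km).
Qed.

Section EffectProbability.
Context {R : realType}.
Local Notation Re := (@complex.Re R).
Local Notation Im := (@complex.Im R).

Section ComplexParts.
Implicit Types a b : R[i].

Lemma ReD a b : Re (a + b) = Re a + Re b.
Proof. by case: a => ? ?; case: b => ? ?. Qed.
Lemma ImD a b : Im (a + b) = Im a + Im b.
Proof. by case: a => ? ?; case: b => ? ?. Qed.
Lemma ReN a : Re (- a) = - Re a. Proof. by case: a. Qed.
Lemma ImN a : Im (- a) = - Im a. Proof. by case: a. Qed.
Lemma ReB a b : Re (a - b) = Re a - Re b. Proof. by rewrite ReD ReN. Qed.
Lemma ImB a b : Im (a - b) = Im a - Im b. Proof. by rewrite ImD ImN. Qed.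
Lemma ReM a b : Re (a * b) = Re a * Re b - Im a * Im b.
Proof. by case: a => ? ?; case: b => ? ?. Qed.
Lemma ImM a b : Im (a * b) = Re a * Im b + Im a * Re b.
Proof. by case: a => ? ?; case: b => ? ?. Qed.
Lemma ReJ a : Re a^* = Re a. Proof. by case: a. Qed.
Lemma ImJ a : Im a^* = - Im a. Proof. by case: a. Qed.

Lemma Re_sum (I : Type) (r : seq I) (P : pred I) (f : I -> R[i]) :
  Re (\sum_(i <- r | P i) f i) = \sum_(i <- r | P i) Re (f i).
Proof. exact: (big_morph _ ReD (erefl : Re 0 = 0)). Qed.
Lemma Im_sum (I : Type) (r : seq I) (P : pred I) (f : I -> R[i]) :
  Im (\sum_(i <- r | P i) f i) = \sum_(i <- r | P i) Im (f i).
Proof. exact: (big_morph _ ImD (erefl : Im 0 = 0)). Qed.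

Lemma complex_ReIm_inj a b : Re a = Re b -> Im a = Im b -> a = b.
Proof. by case: a => ? ?; case: b => ? ? /= -> ->. Qed.

Lemma ger0_Re a : 0 <= a -> 0 <= Re a.
Proof. by rewrite lecE => /andP[]. Qed.

Lemma ger0E a : (0 <= a) = (Im a == 0) && (0 <= Re a).
Proof. by rewrite lecE eq_sym. Qed.

End ComplexParts.

Section SequenceLimits.
Implicit Types (u v : nat -> R[i]) (l m : R[i]).

Lemma cvgr_unique (f : nat -> R) (a b : R) : f @ \oo --> a -> f @ \oo --> b -> a = b.
Proof.
by move=> fa fb; rewrite -(cvg_lim (@Rhausdorff R) fa) (cvg_lim (@Rhausdorff R) fb).
Qed.

Lemma cvgr_le (f : nat -> R) (a c : R) : f @ \oo --> a -> (forall n, f n <= c) -> a <= c.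
Proof.
move=> fa fc; rewrite -(cvg_lim (@Rhausdorff R) fa); apply: limr_le; last exact: nearW.
by apply/cvg_ex; exists a.
Qed.

Lemma cvgr_ge (f : nat -> R) (a c : R) : f @ \oo --> a -> (forall n, c <= f n) -> c <= a.
Proof.
move=> fa fc; rewrite -(cvg_lim (@Rhausdorff R) fa); apply: limr_ge; last exact: nearW.
by apply/cvg_ex; exists a.
Qed.

Lemma cvg_natmul_eq0 (r l : R) : (fun n => r *+ n) @ \oo --> l -> r = 0.
Proof.
move=> rl; have rSl : (fun n => r *+ n.+1) @ \oo --> l by rewrite cvg_shiftS.
have : (fun n => r + r *+ n) @ \oo --> r + l by apply: cvgD => //; exact: cvg_cst.
under eq_fun do rewrite -mulrS.
by move/(cvgr_unique rSl); lra.
Qed.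

Lemma cvgC_unique u l m : cvgC u l -> cvgC u m -> l = m.
Proof.
by move=> [ul1 ul2] [um1 um2]; apply: complex_ReIm_inj;
  [exact: cvgr_unique ul1 um1 | exact: cvgr_unique ul2 um2].
Qed.

Lemma cvgC_add u v l m : cvgC u l -> cvgC v m -> cvgC (fun n => u n + v n) (l + m).
Proof.
move=> [ul1 ul2] [vm1 vm2]; split.
- under eq_fun do rewrite ReD; rewrite ReD; exact: cvgD.
- under eq_fun do rewrite ImD; rewrite ImD; exact: cvgD.
Qed.

Lemma cvgC_mull (c : R[i]) u l : cvgC u l -> cvgC (fun n => c * u n) (c * l).
Proof.
move=> [ul1 ul2]; split.
- under eq_fun do rewrite ReM; rewrite ReM.
  by apply: cvgB; apply: cvgM => //; exact: cvg_cst.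
- under eq_fun do rewrite ImM; rewrite ImM.
  by apply: cvgD; apply: cvgM => //; exact: cvg_cst.
Qed.

Lemma cvgC_conj u l : cvgC u l -> cvgC (fun n => (u n)^*) l^*.
Proof.
move=> [ul1 ul2]; split.
- by under eq_fun do rewrite ReJ; rewrite ReJ.
- by under eq_fun do rewrite ImJ; rewrite ImJ; exact: cvgN.
Qed.

Lemma cvgC_ext u v l : (forall n, u n = v n) -> cvgC u l -> cvgC v l.
Proof. by move=> e; have -> : v = u by apply: funext => n; rewrite e. Qed.

Lemma cvgC_eventually_cst u l : (exists N, forall n, (N <= n)%N -> u n = l) -> cvgC u l.
Proof. by move=> [N uN]; split; apply: cvg_near_cst; exists N => // n /= /uN ->. Qed.

Lemma cvgC_shift u l : cvgC (fun n => u n.+1) l -> cvgC u l.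
Proof. by move=> [ul1 ul2]; split; rewrite -cvg_shiftS. Qed.

Lemma cvgC_sum_const_eq0 (c : R[i]) l : cvgC (fun n => \sum_(k < n) c) l -> c = 0.
Proof.
move=> [cl1 cl2]; apply: complex_ReIm_inj.
- apply: (@cvg_natmul_eq0 _ (Re l)).
  suff <- : (fun n => Re (\sum_(k < n) c)) = (fun n => Re c *+ n) by [].
  by apply: funext => n; rewrite Re_sum sumr_const card_ord.
- apply: (@cvg_natmul_eq0 _ (Im l)).
  suff <- : (fun n => Im (\sum_(k < n) c)) = (fun n => Im c *+ n) by [].
  by apply: funext => n; rewrite Im_sum sumr_const card_ord.
Qed.

Lemma cvg0_sqr_le (z a : nat -> R) (g : R) : 0 <= g -> (forall n, 0 <= a n) ->
  (forall n, z n ^+ 2 <= a n * g) ->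
  (forall eps, 0 < eps -> exists N, forall n, (N <= n)%N -> Num.sqrt (a n) < eps) ->
  z @ \oo --> 0.
Proof.
move=> g0 a0 za aeps; apply/cvgrPdist_lt => eps eps0.
set q := Num.sqrt g.
have q0 : 0 <= q := sqrtr_ge0 g.
set d := eps / (q + 1).
have dp : 0 < d by rewrite divr_gt0 // ltr_wpDl.
have epsE : eps = d * (q + 1) by rewrite /d divfK // gt_eqF // ltr_wpDl.
have [N aN] := aeps _ dp.
exists N => // n /= /aN sd; rewrite sub0r normrN.
have zn := za n; rewrite -(sqr_sqrtr (a0 n)) -(sqr_sqrtr g0) -/q in zn.
move: sd zn (sqrtr_ge0 (a n)); set s := Num.sqrt (a n) => sd zn s0.
have sq : s * q < eps.
  have : s * q <= d * q by rewrite ler_wpM2r // ltW.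
  by rewrite epsE mulrDr mulr1; lra.
have sq0 : 0 <= s * q by rewrite mulr_ge0.
have zn2 : `|z n| ^+ 2 < eps ^+ 2.
  rewrite real_normK ?num_real //; apply: le_lt_trans zn _.
  by rewrite -exprMn; move: sq sq0; set p := s * q; nra.
by move: zn2 (normr_ge0 (z n)); set w := `|z n|; nra.
Qed.

End SequenceLimits.

Lemma le_of_quadratic_ge0 (X Y beta : R) : 0 <= Y -> 0 <= beta ->
  (forall t, 0 <= X - 2 * t * beta + t ^+ 2 * beta * Y) -> beta <= X * Y.
Proof.
move=> Y0 beta0 quad; have [Yeq0|Yn0] := eqVneq Y 0.
  rewrite Yeq0 mulr0; have [->//|betan0] := eqVneq beta 0.
  have := quad ((X + 1) / (2 * beta)); rewrite Yeq0 mulr0 addr0.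
  have -> : 2 * ((X + 1) / (2 * beta)) * beta = X + 1 by field; rewrite betan0.
  lra.
have Yp : 0 < Y by rewrite lt_def Yn0.
have := quad Y^-1.
have -> : X - 2 * Y^-1 * beta + Y^-1 ^+ 2 * beta * Y = (X * Y - beta) / Y by field.
by rewrite pmulr_lge0 ?invr_gt0 //; lra.
Qed.

Section HermitianForm.
Context {V : lmodType R[i]} {B : V -> V -> R[i]}.
Hypothesis B_linear : forall a x y z, B (a *: x + y) z = a * B x z + B y z.
Implicit Types (x y z : V) (a : R[i]).

Lemma form0l z : B 0 z = 0.
Proof.
have := B_linear 1 0 0 z; rewrite scaler0 addr0 mul1r.
by move/(congr1 (fun t => t - B 0 z)); rewrite subrr addrK.
Qed.
Lemma formDl x y z : B (x + y) z = B x z + B y z.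
Proof. by have := B_linear 1 x y z; rewrite scale1r mul1r. Qed.
Lemma formZl a x z : B (a *: x) z = a * B x z.
Proof. by have := B_linear a x 0 z; rewrite addr0 form0l addr0. Qed.
Lemma formNl x z : B (- x) z = - B x z.
Proof. by rewrite -scaleN1r formZl mulN1r. Qed.
Lemma formBl x y z : B (x - y) z = B x z - B y z.
Proof. by rewrite formDl formNl. Qed.
Lemma form_suml (I : Type) (r : seq I) (P : pred I) (f : I -> V) y :
  B (\sum_(i <- r | P i) f i) y = \sum_(i <- r | P i) B (f i) y.
Proof. exact: (big_morph (B^~ y) (fun u v => formDl u v y) (form0l y)). Qed.

Hypothesis B_hermitian : forall x y, B y x = (B x y)^*.

Lemma form0r z : B z 0 = 0.
Proof. by rewrite B_hermitian form0l conjC0. Qed.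
Lemma formDr x y z : B z (x + y) = B z x + B z y.
Proof.
by rewrite (B_hermitian (x + y)) formDl rmorphD (B_hermitian x) (B_hermitian y).
Qed.
Lemma formZr a x z : B z (a *: x) = a^* * B z x.
Proof. by rewrite (B_hermitian (a *: x)) formZl rmorphM (B_hermitian x). Qed.
Lemma formNr x z : B z (- x) = - B z x.
Proof. by rewrite (B_hermitian (- x)) formNl rmorphN (B_hermitian x). Qed.
Lemma formBr x y z : B z (x - y) = B z x - B z y.
Proof. by rewrite formDr formNr. Qed.

Hypothesis B_ge0 : forall x, 0 <= B x x.

Lemma cauchy_schwarz x y :
  Re (B x y) ^+ 2 + Im (B x y) ^+ 2 <= Re (B x x) * Re (B y y).
Proof.
apply: le_of_quadratic_ge0; [exact: ger0_Re | by rewrite addr_ge0 ?sqr_ge0 |] => t.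
have := ger0_Re (B_ge0 (x + (- ((t%:C)%C * B x y)) *: y)).
rewrite formDl formZl !formDr !formZr (B_hermitian x y).
move: (ger0_Im (B_ge0 x)) (ger0_Im (B_ge0 y)).
case: (B x x) => p1 p2; case: (B y y) => q1 q2; case: (B x y) => b1 b2 /= I1 I2 h.
subst p2 q2.
by apply: le_trans h _; rewrite le_eqVlt; apply/orP; left; apply/eqP; ring.
Qed.

End HermitianForm.

Section Hilbert.
Context {H : hilbert R}.
Local Notation ip := (@inner R H).
Implicit Types (x y z : H) (a : R[i]) (S T : H -> H).

Lemma inner0l y : ip 0 y = 0. Proof. exact: (form0l (@inner_linear R H) y). Qed.
Lemma innerDl x y z : ip (x + y) z = ip x z + ip y z.
Proof. exact: (formDl (@inner_linear R H) x y z). Qed.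
Lemma innerZl a x z : ip (a *: x) z = a * ip x z.
Proof. exact: (formZl (@inner_linear R H) a x z). Qed.
Lemma innerNl x z : ip (- x) z = - ip x z.
Proof. exact: (formNl (@inner_linear R H) x z). Qed.
Lemma innerBl x y z : ip (x - y) z = ip x z - ip y z.
Proof. exact: (formBl (@inner_linear R H) x y z). Qed.
Lemma inner_suml (I : Type) (r : seq I) (P : pred I) (f : I -> H) y :
  ip (\sum_(i <- r | P i) f i) y = \sum_(i <- r | P i) ip (f i) y.
Proof. exact: (form_suml (@inner_linear R H) r P f y). Qed.
Lemma inner0r y : ip y 0 = 0.
Proof. exact: (form0r (@inner_linear R H) (@inner_conj R H) y). Qed.
Lemma innerDr x y z : ip z (x + y) = ip z x + ip z y.
Proof. exact: (formDr (@inner_linear R H) (@inner_conj R H) x y z). Qed.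
Lemma innerZr a x z : ip z (a *: x) = a^* * ip z x.
Proof. exact: (formZr (@inner_linear R H) (@inner_conj R H) a x z). Qed.
Lemma innerNr x z : ip z (- x) = - ip z x.
Proof. exact: (formNr (@inner_linear R H) (@inner_conj R H) x z). Qed.
Lemma innerBr x y z : ip z (x - y) = ip z x - ip z y.
Proof. exact: (formBr (@inner_linear R H) (@inner_conj R H) x y z). Qed.

Lemma inner_cauchy_schwarz x y :
  Re (ip x y) ^+ 2 + Im (ip x y) ^+ 2 <= Re (ip x x) * Re (ip y y).
Proof.
exact: (cauchy_schwarz (@inner_linear R H) (@inner_conj R H) (@inner_ge0 R H) x y).
Qed.

Lemma Re_inner_ge0 x : 0 <= Re (ip x x). Proof. exact: ger0_Re (inner_ge0 x). Qed.
Lemma Im_inner_self x : Im (ip x x) = 0. Proof. exact: ger0_Im (inner_ge0 x). Qed.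

Lemma inner_if (b : bool) x y : ip (if b then x else 0) y = if b then ip x y else 0.
Proof. by case: b; rewrite ?inner0l. Qed.

Lemma inner_injl x x' : (forall y, ip x y = ip x' y) -> x = x'.
Proof.
move=> xx'; apply/eqP; rewrite -subr_eq0; apply/eqP; apply: inner_eq0.
by rewrite innerBl xx' subrr.
Qed.

Lemma op_inner_ext (S T : H -> H) : (forall x y, ip (S x) y = ip (T x) y) -> S = T.
Proof. by move=> ST; apply: funext => x; apply: inner_injl; exact: ST. Qed.

Definition op_linear (T : H -> H) := forall a x y, T (a *: x + y) = a *: T x + T y.
Definition op_selfadjoint (T : H -> H) := forall x y, ip (T x) y = ip x (T y).
Definition op_le1 (T : H -> H) := forall x, Re (ip (T x) x) <= Re (ip x x).

Lemma op_linearD T : op_linear T -> forall x y, T (x + y) = T x + T y.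
Proof. by move=> Tlin x y; have := Tlin 1 x y; rewrite !scale1r. Qed.
Lemma op_linear0 T : op_linear T -> T 0 = 0.
Proof.
move=> Tlin; have := op_linearD Tlin 0 0; rewrite addr0.
by move/(congr1 (fun t => t - T 0)); rewrite subrr addrK.
Qed.
Lemma op_linearZ T : op_linear T -> forall a x, T (a *: x) = a *: T x.
Proof. by move=> Tlin a x; have := Tlin a x 0; rewrite !addr0 op_linear0 // addr0. Qed.

Section EffectCriterion.
Variable T : H -> H.
Hypotheses (T_linear : op_linear T) (T_selfadjoint : op_selfadjoint T).
Hypotheses (T_ge0 : op_ge0 T) (T_le1 : op_le1 T).

Lemma op_form_linear a x y z : ip (T (a *: x + y)) z = a * ip (T x) z + ip (T y) z.
Proof. by rewrite T_linear innerDl innerZl. Qed.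

Lemma op_form_hermitian x y : ip (T y) x = (ip (T x) y)^*.
Proof. by rewrite (T_selfadjoint y x) (inner_conj (T x) y). Qed.

(* Cauchy-Schwarz for the form <T _, _> at (x, T x), then T <= 1 at T x. *)
Lemma op_norm_sqr_le x : Re (ip (T x) (T x)) <= Re (ip (T x) x).
Proof.
have := cauchy_schwarz op_form_linear op_form_hermitian T_ge0 x (T x).
have := T_le1 (T x); have := Re_inner_ge0 (T x); have := ger0_Re (T_ge0 x).
set r := Re (ip (T x) (T x)); set p := Re (ip (T x) x); set q := Re (ip (T (T x)) (T x)).
set i := Im _ => p0 r0 qr cs.
have rr : r * r <= p * r.
  have : p * q <= p * r by rewrite ler_wpM2l.
  have : r ^+ 2 <= r ^+ 2 + i ^+ 2 by rewrite lerDl sqr_ge0.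
  by move: cs; rewrite expr2; lra.
have [->//|rn0] := eqVneq r 0.
by rewrite -(ler_pM2r (_ : 0 < r)) // lt_def rn0.
Qed.

Lemma is_effectI : is_effect T.
Proof.
split=> //; first split=> //.
- exists 1 => x; rewrite mul1r /hnorm ler_sqrt ?Re_inner_ge0 //.
  exact: le_trans (op_norm_sqr_le x) (T_le1 x).
- by move=> x; rewrite lecE Im_inner_self (ger0_Im (T_ge0 x)) eqxx; exact: T_le1.
Qed.

End EffectCriterion.

Lemma effect_linear T : is_effect T -> op_linear T. Proof. by case=> [[]]. Qed.
Lemma effect_selfadjoint T : is_effect T -> op_selfadjoint T. Proof. by case=> [[]]. Qed.
Lemma effect_ge0 T : is_effect T -> op_ge0 T. Proof. by case. Qed.
Lemma effect_obs T : is_effect T -> is_obs T. Proof. by case. Qed.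

Definition op0 : H -> H := fun _ => 0.
Definition opC (T : H -> H) : H -> H := fun x => x - T x.

Lemma effect_id : is_effect (id : H -> H).
Proof. by apply: is_effectI => // x; apply: inner_ge0. Qed.

Lemma effect0 : is_effect op0.
Proof.
apply: is_effectI => [a x y|x y|x|x]; rewrite /op0 ?inner0l ?inner0r //.
- by rewrite scaler0 addr0.
- exact: Re_inner_ge0.
Qed.

Lemma effectC T : is_effect T -> is_effect (opC T).
Proof.
move=> Teff; apply: is_effectI => [a x y|x y|x|x]; rewrite /opC.
- by rewrite (effect_linear Teff) scalerBr opprD addrACA.
- by rewrite innerBl innerBr (effect_selfadjoint Teff).
- by rewrite innerBl subr_ge0; case: Teff.
- by rewrite innerBl ReB; have := ger0_Re (effect_ge0 Teff x); lra.
Qed.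

Section Polarization.
Variable A : H -> H.
Hypotheses (A_linear : op_linear A) (A_selfadjoint : op_selfadjoint A).

Lemma Re_op_form_shift x y c :
  Re (ip (A (x + c *: y)) (x + c *: y)) =
  Re (ip (A x) x) + 2 * (Re c * Re (ip (A x) y) + Im c * Im (ip (A x) y))
  + (Re c ^+ 2 + Im c ^+ 2) * Re (ip (A y) y).
Proof.
rewrite op_linearD // op_linearZ // !innerDl !innerZl !innerDr !innerZr.
rewrite (op_form_hermitian A_selfadjoint x y).
move: (ip (A x) x) (ip (A x) y) (ip (A y) y) => p w q.
by case: p => ? ?; case: w => ? ?; case: q => ? ?; case: c => ? ? /=; ring.
Qed.

Lemma polarization_Re x y :
  Re (ip (A x) y) = (Re (ip (A (x + y)) (x + y)) - Re (ip (A (x - y)) (x - y))) / 4.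
Proof.
have := Re_op_form_shift x y 1; have := Re_op_form_shift x y (-1).
by rewrite scale1r scaleN1r ReN ImN /= => -> ->; lra.
Qed.

Lemma polarization_Im x y :
  Im (ip (A x) y) = (Re (ip (A (x + 'i%C *: y)) (x + 'i%C *: y))
                    - Re (ip (A (x - 'i%C *: y)) (x - 'i%C *: y))) / 4.
Proof.
have := Re_op_form_shift x y 'i%C; have := Re_op_form_shift x y (- 'i%C).
by rewrite scaleNr ReN ImN /= => -> ->; lra.
Qed.

End Polarization.

Lemma wot_sum_of_diag (A : nat -> H -> H) S :
  (forall j, op_linear (A j)) -> (forall j, op_selfadjoint (A j)) ->
  op_linear S -> op_selfadjoint S ->
  (forall v, (fun n => \sum_(0 <= j < n) Re (ip (A j v) v)) @ \oo --> Re (ip (S v) v)) ->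
  wot_sum A S.
Proof.
move=> Alin Asa Slin Ssa diag x y; split.
- rewrite polarization_Re //.
  suff -> : (fun n => Re (\sum_(j < n) ip (A j x) y)) =
    (fun n => (\sum_(0 <= j < n) Re (ip (A j (x + y)) (x + y))
             - \sum_(0 <= j < n) Re (ip (A j (x - y)) (x - y))) / 4).
    by apply: cvgMr_tmp; apply: cvgB; exact: diag.
  apply: funext => n; rewrite Re_sum !big_mkord -sumrB mulr_suml.
  by apply: eq_bigr => j _; exact: polarization_Re.
- rewrite polarization_Im //.
  suff -> : (fun n => Im (\sum_(j < n) ip (A j x) y)) =
    (fun n => (\sum_(0 <= j < n) Re (ip (A j (x + 'i%C *: y)) (x + 'i%C *: y))
             - \sum_(0 <= j < n) Re (ip (A j (x - 'i%C *: y)) (x - 'i%C *: y))) / 4).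
    by apply: cvgMr_tmp; apply: cvgB; exact: diag.
  apply: funext => n; rewrite Im_sum !big_mkord -sumrB mulr_suml.
  by apply: eq_bigr => j _; exact: polarization_Im.
Qed.

Section EffectSeries.
Variable M : nat -> H -> H.
Hypotheses (M_effect : forall n, is_effect (M n)) (M_sum1 : wot_sum M id).

Definition partial_sum (P : pred nat) (n : nat) (x : H) : H :=
  \sum_(0 <= k < n | P k) M k x.
Definition weight (v : H) (n : nat) : R := Re (ip (M n v) v).

Lemma weight_ge0 v n : 0 <= weight v n.
Proof. exact: ger0_Re (effect_ge0 (M_effect n) v). Qed.

Lemma inner_partial_sum P n x y :
  ip (partial_sum P n x) y = \sum_(0 <= k < n | P k) ip (M k x) y.
Proof. exact: inner_suml. Qed.

Lemma Re_partial_sum P n v :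
  Re (ip (partial_sum P n v) v) = \sum_(0 <= k < n | P k) weight v k.
Proof. by rewrite inner_partial_sum Re_sum. Qed.

Lemma weight_series_cvg v :
  (fun n => \sum_(0 <= k < n) weight v k) @ \oo --> Re (ip v v).
Proof.
have [Re_cvg _] := M_sum1 v v.
suff -> : (fun n => \sum_(0 <= k < n) weight v k) =
          (fun n => Re (\sum_(k < n) ip (M k v) v)) by [].
by apply: funext => n; rewrite Re_sum big_mkord.
Qed.

Lemma weight_partial_le v n : \sum_(0 <= k < n) weight v k <= Re (ip v v).
Proof.
have wcvg : cvgn (fun n => \sum_(0 <= k < n) weight v k).
  by apply/cvg_ex; exists (Re (ip v v)); exact: (@weight_series_cvg v).
rewrite -(cvg_lim (@Rhausdorff R) (@weight_series_cvg v)).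
apply: (nondecreasing_cvgn_le _ wcvg) => k m km.
rewrite (big_nat_split_ge (weight v) xpredT km) /= lerDl.
by apply: sumr_ge0 => i _; exact: weight_ge0.
Qed.

Lemma partial_sum_linear P n : op_linear (partial_sum P n).
Proof.
move=> a x y; rewrite /partial_sum scaler_sumr -big_split /=.
by apply: eq_bigr => k _; rewrite (effect_linear (M_effect k)).
Qed.

Lemma partial_sum_selfadjoint P n : op_selfadjoint (partial_sum P n).
Proof.
move=> x y; rewrite inner_partial_sum (inner_conj (partial_sum P n y) x).
rewrite inner_partial_sum rmorph_sum; apply: eq_bigr => k _.
by rewrite (effect_selfadjoint (M_effect k)) (inner_conj (M k y) x).
Qed.

Lemma partial_sum_ge0 P n : op_ge0 (partial_sum P n).
Proof.
by move=> x; rewrite inner_partial_sum; apply: sumr_ge0 => k _; exact: effect_ge0.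
Qed.

Lemma partial_sum_le1 P n : op_le1 (partial_sum P n).
Proof.
move=> v; rewrite Re_partial_sum; apply: le_trans (weight_partial_le v n).
rewrite big_mkcond /=; apply: ler_sum => k _.
by case: (P k) => //; exact: weight_ge0.
Qed.

Lemma partial_sumB P m n x : (n <= m)%N ->
  partial_sum P m x - partial_sum P n x = partial_sum (fun k => (n <= k)%N && P k) m x.
Proof.
by move=> nm; rewrite /partial_sum (big_nat_split_ge _ _ nm) addrAC subrr add0r.
Qed.

Lemma Re_partial_sum_tail_le P m n v : (n <= m)%N ->
  Re (ip (partial_sum (fun k => (n <= k)%N && P k) m v) v) <=
  \sum_(0 <= k < m) weight v k - \sum_(0 <= k < n) weight v k.
Proof.
move=> nm; rewrite Re_partial_sum (big_nat_split_ge (weight v) xpredT nm).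
rewrite addrAC subrr add0r [leLHS]big_mkcond [leRHS]big_mkcond /=.
apply: ler_sum => k _.
by case: (n <= k)%N; case: (P k) => //=; exact: weight_ge0.
Qed.

(* ||T x||^2 <= <T x, x> bounds the increments by tails of the series of weights. *)
Lemma partial_sum_cauchy P x eps : 0 < eps -> exists N, forall m n,
  (N <= m)%N -> (N <= n)%N -> hnorm (partial_sum P m x - partial_sum P n x) < eps.
Proof.
move=> eps0; have eps20 : 0 < eps ^+ 2 / 2 by rewrite divr_gt0 // exprn_gt0.
have /cvgrPdist_lt /(_ _ eps20) [N _ wN] := @weight_series_cvg x.
exists N => m n Nm Nn.
wlog nm : m n Nm Nn / (n <= m)%N.
  move=> W; case: (leqP n m) => [|/ltnW] nm; first exact: W.
  by rewrite /hnorm -opprB innerNl innerNr opprK; exact: W.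
have sqrt_eps2 : Num.sqrt (eps ^+ 2) = eps by rewrite sqrtr_sqr ger0_norm // ltW.
rewrite partial_sumB // /hnorm -[ltRHS]sqrt_eps2 ltr_sqrt ?exprn_gt0 //.
apply: le_lt_trans (op_norm_sqr_le (partial_sum_linear _ _) (partial_sum_selfadjoint _ _)
  (partial_sum_ge0 _ _) (partial_sum_le1 _ _) x) _.
apply: le_lt_trans (Re_partial_sum_tail_le P x nm) _.
have := wN m Nm; have := wN n Nn => /=.
set L := Re (ip x x); set sm := \sum_(0 <= k < m) _; set sn := \sum_(0 <= k < n) _.
move=> dn dm; have snL : L - sn <= `|L - sn| := ler_norm _.
have smL : sm - L <= `|L - sm| by rewrite distrC; exact: ler_norm.
lra.
Qed.

(* The strong limit of the partial sums, which exists by completeness. *)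
Definition subsum (P : pred nat) (x : H) : H :=
  xget 0 [set l : H | forall eps : R, 0 < eps -> exists N : nat, forall n : nat,
    (N <= n)%N -> hnorm (partial_sum P n x - l) < eps].

Lemma subsum_strong_cvg P x eps : 0 < eps -> exists N : nat, forall n : nat,
  (N <= n)%N -> hnorm (partial_sum P n x - subsum P x) < eps.
Proof.
move: eps.
have := @inner_complete R H (fun n => partial_sum P n x) (partial_sum_cauchy P x).
by move/(xgetPex 0).
Qed.

Lemma subsum_cvg P x y : cvgC (fun n => ip (partial_sum P n x) y) (ip (subsum P x) y).
Proof.
pose e n := Re (ip (partial_sum P n x - subsum P x) (partial_sum P n x - subsum P x)).
have cs n := inner_cauchy_schwarz (partial_sum P n x - subsum P x) y.
have e0 n : 0 <= e n by exact: Re_inner_ge0.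
split; apply/subr_cvg0; apply: (@cvg0_sqr_le _ e (Re (ip y y)) (Re_inner_ge0 y) e0);
  try exact: subsum_strong_cvg; move=> n.
- by rewrite -ReB -innerBl; apply: le_trans (cs n); rewrite lerDl sqr_ge0.
- by rewrite -ImB -innerBl; apply: le_trans (cs n); rewrite lerDr sqr_ge0.
Qed.

Lemma subsum_eq P S :
  (forall x y, cvgC (fun n => \sum_(0 <= k < n | P k) ip (M k x) y) (ip (S x) y)) ->
  subsum P = S.
Proof.
move=> PS; apply: op_inner_ext => x y; apply: cvgC_unique (subsum_cvg P x y) _.
by apply: cvgC_ext (PS x y) => n; rewrite inner_partial_sum.
Qed.

Lemma subsum_linear P : op_linear (subsum P).
Proof.
move=> a x y; apply: inner_injl => z.
apply: cvgC_unique (subsum_cvg P (a *: x + y) z) _; rewrite innerDl innerZl.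
apply: cvgC_ext (cvgC_add (cvgC_mull a (subsum_cvg P x z)) (subsum_cvg P y z)) => n.
by rewrite partial_sum_linear innerDl innerZl.
Qed.

Lemma subsum_selfadjoint P : op_selfadjoint (subsum P).
Proof.
move=> x y; apply: cvgC_unique (subsum_cvg P x y) _.
rewrite (inner_conj (subsum P y) x).
apply: cvgC_ext (cvgC_conj (subsum_cvg P y x)) => n.
by rewrite (partial_sum_selfadjoint P n x y) (inner_conj (partial_sum P n y) x).
Qed.

Lemma subsum_ge0 P : op_ge0 (subsum P).
Proof.
move=> x; rewrite ger0E; have [Re_cvg Im_cvg] := subsum_cvg P x x; apply/andP; split.
- move: Im_cvg; under eq_fun do rewrite (ger0_Im (partial_sum_ge0 _ _ _)).
  by move/(cvgr_unique (cvg_cst 0)) => <-.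
- by apply: cvgr_ge Re_cvg _ => n; exact: ger0_Re (partial_sum_ge0 _ _ _).
Qed.

Lemma subsum_le1 P : op_le1 (subsum P).
Proof.
move=> x; have [Re_cvg _] := subsum_cvg P x x.
by apply: cvgr_le Re_cvg _ => n; exact: partial_sum_le1.
Qed.

Lemma subsum_effect P : is_effect (subsum P).
Proof.
exact: is_effectI (subsum_linear P) (subsum_selfadjoint P) (subsum_ge0 P) (subsum_le1 P).
Qed.

Lemma subsum_weight_esum (G : set nat) v :
  (Re (ip (subsum (fun n => n \in G) v) v))%:E = (\esum_(n in G) (weight v n)%:E)%E.
Proof.
have [Re_cvg _] := subsum_cvg (fun n => n \in G) v v.
have sumE : (fun n => (\sum_(0 <= k < n | k \in G) (weight v k)%:E)%E) @ \oo -->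
            (Re (ip (subsum (fun n => n \in G) v) v))%:E.
  under eq_fun do rewrite sumEFin -Re_partial_sum.
  by apply: cvg_EFin; [exact: nearW | exact: Re_cvg].
rewrite -(cvg_lim (@ereal_hausdorff R) sumE) nneseries_esum; last first.
  by move=> n _; rewrite lee_fin; exact: weight_ge0.
by congr (esum _ _); apply: funext => n; apply: propext; rewrite /= in_setE.
Qed.

Lemma subsum_bigcup_diag (F : nat -> set nat) : trivIset setT F -> forall v,
  (fun n => \sum_(0 <= j < n) Re (ip (subsum (fun k => k \in F j) v) v)) @ \oo -->
  Re (ip (subsum (fun k => k \in \bigcup_j F j) v) v).
Proof.
move=> Fdisj v; set q := fun j => Re (ip (subsum (fun k => k \in F j) v) v).
have q0 j : (0 <= (q j)%:E)%E by rewrite lee_fin; exact: ger0_Re (subsum_ge0 _ _).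
have := @is_cvg_nneseries R (fun j => (q j)%:E) xpredT 0 (fun j _ _ => q0 j).
rewrite (eq_eseriesr (g := fun j => (\esum_(k in F j) (weight v k)%:E)%E)); last first.
  by move=> j _; exact: subsum_weight_esum.
rewrite nneseries_esumT; last first.
  by move=> j; apply: esum_ge0 => k _; rewrite lee_fin; exact: weight_ge0.
rewrite -esum_bigcupT // -?subsum_weight_esum; last first.
  by move=> k; rewrite lee_fin; exact: weight_ge0.
by under eq_fun do rewrite sumEFin; move/fine_cvg.
Qed.

Lemma subsum_sigma (F : nat -> set nat) : trivIset setT F ->
  wot_sum (fun j => subsum (fun k => k \in F j)) (subsum (fun k => k \in \bigcup_j F j)).
Proof.
move=> Fdisj; apply: wot_sum_of_diag.
- by move=> j; exact: subsum_linear.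
- by move=> j; exact: subsum_selfadjoint.
- exact: subsum_linear.
- exact: subsum_selfadjoint.
- by move=> v; exact: (@subsum_bigcup_diag _ Fdisj v).
Qed.

Lemma subsum_setT : subsum (fun k => k \in setT) = id.
Proof.
apply: subsum_eq => x y; apply: cvgC_ext (M_sum1 x y) => n.
by rewrite big_mkord; apply: eq_bigl => k; rewrite in_setT.
Qed.

Definition series_povm : povm H nat :=
  @Povm R H _ nat (fun F => subsum (fun k => k \in F))
    (fun F _ => effect_obs (subsum_effect _)) (fun F _ => subsum_ge0 _)
    subsum_setT (fun F _ => @subsum_sigma F).

Lemma series_povmE F : povm_fun series_povm F = subsum (fun k => k \in F).
Proof. by []. Qed.

End EffectSeries.

Section PovmFacts.
Context {d : measure_display} {X : measurableType d} (mu : povm H X).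

Lemma povm_set0 : povm_fun mu set0 = op0.
Proof.
have := @povm_sigma _ _ _ _ mu (fun=> set0) (fun=> measurable0) (@trivIset_set0 _ _ setT).
rewrite bigcup0 // => sum0; apply: op_inner_ext => x y.
by rewrite /op0 inner0l; exact: cvgC_sum_const_eq0 (sum0 x y).
Qed.

Lemma povm_setC E : measurable E ->
  forall x y, ip (povm_fun mu (~` E) x) y = ip x y - ip (povm_fun mu E x) y.
Proof.
move=> mE; pose G n := if n is 0%N then E else if n is 1%N then ~` E else set0.
have mG n : measurable (G n).
  by case: n => [|[|n]] /=; [exact: mE|exact: measurableC|exact: measurable0].
have Gdisj : trivIset setT G.
  move=> i j _ _ [z [Gi Gj]]; move: Gi Gj.
  by case: i => [|[|i]]; case: j => [|[|j]] //= Gi Gj; exfalso; auto.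
have GT : \bigcup_n G n = setT.
  apply/seteqP; split => z // _.
  by case: (pselect (E z)) => Ez; [exists 0%N | exists 1%N].
have := povm_sigma mu mG Gdisj; rewrite GT povm_setT => sumG x y.
have sumE : cvgC (fun n => \sum_(i < n) ip (povm_fun mu (G i) x) y)
                 (ip (povm_fun mu E x) y + ip (povm_fun mu (~` E) x) y).
  apply: cvgC_eventually_cst; exists 2%N => -[|[|n]] // _.
  rewrite !big_ord_recl /= big1 ?addr0 ?addrA // => i _.
  by rewrite povm_set0 /op0 inner0l.
by rewrite (cvgC_unique (sumG x y) sumE) /= addrAC subrr add0r.
Qed.

Lemma povm_effect E : measurable E -> is_effect (povm_fun mu E).
Proof.
move=> mE; split; [exact: povm_obs|exact: povm_ge0|] => x.
rewrite lecE Im_inner_self (ger0_Im (povm_ge0 mu mE x)) eqxx /=.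
by have := ger0_Re (povm_ge0 mu (measurableC mE) x); rewrite povm_setC // ReB; lra.
Qed.

End PovmFacts.

Section BinaryPovm.
Variables (A : H -> H) (A_effect : is_effect A).

Definition binary_effect (n : nat) : H -> H :=
  if n is 0%N then A else if n is 1%N then opC A else op0.

Lemma binary_effect_effect n : is_effect (binary_effect n).
Proof.
case: n => [|[|n]]; rewrite /binary_effect;
  [exact: A_effect | exact: effectC | exact: effect0].
Qed.

Lemma sum_binary_effect x y n (P : pred nat) :
  \sum_(i < n.+2 | P i) ip (binary_effect i x) y =
  (if P 0%N then ip (A x) y else 0) + (if P 1%N then ip (opC A x) y else 0).
Proof.
rewrite big_mkcond !big_ord_recl /= big1 ?addr0 // => i _.
by rewrite /op0 inner0l; case: (P _).
Qed.

Lemma binary_effect_sum1 : wot_sum binary_effect id.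
Proof.
move=> x y; apply: cvgC_eventually_cst; exists 2%N => -[|[|n]] // _.
by rewrite (sum_binary_effect x y n xpredT) /opC innerBl addrC subrK.
Qed.

Definition binary_povm : povm H nat :=
  series_povm binary_effect_effect binary_effect_sum1.

Lemma binary_povmE F : povm_fun binary_povm F =
  (fun x => (if 0%N \in F then A x else 0) + (if 1%N \in F then x - A x else 0)).
Proof.
rewrite series_povmE; apply: (subsum_eq binary_effect_effect binary_effect_sum1) => x y.
apply: cvgC_eventually_cst; exists 2%N => -[|[|n]] // _.
by rewrite big_mkord sum_binary_effect innerDl /opC !inner_if.
Qed.

Lemma binary_povm0 : povm_fun binary_povm [set 0%N] = A.
Proof.
rewrite binary_povmE; apply: funext => x.
by rewrite !in_set1E eqxx addr0.
Qed.

End BinaryPovm.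

Section CompletedFamily.
Variables (Ms : nat -> H -> H) (S : H -> H).
Hypotheses (Ms_effect : forall n, is_effect (Ms n)) (Ms_sum : wot_sum Ms S).
Hypothesis S_effect : is_effect S.

Definition completed_family (n : nat) : H -> H := if n is k.+1 then Ms k else opC S.

Lemma completed_family_effect n : is_effect (completed_family n).
Proof.
by case: n => [|k]; rewrite /completed_family; [exact: effectC | exact: Ms_effect].
Qed.

Lemma completed_family_sum1 : wot_sum completed_family id.
Proof.
move=> x y; apply: cvgC_shift.
have head : cvgC (fun=> ip (opC S x) y) (ip (opC S x) y).
  by apply: cvgC_eventually_cst; exists 0%N.
have := cvgC_add head (Ms_sum x y).
have -> : ip (opC S x) y + ip (S x) y = ip x y by rewrite /opC innerBl subrK.
by apply: cvgC_ext => n; rewrite big_ord_recl.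
Qed.

Definition completed_povm : povm H nat :=
  series_povm completed_family_effect completed_family_sum1.

Lemma completed_povm_succ k : povm_fun completed_povm [set k.+1] = Ms k.
Proof.
rewrite series_povmE.
apply: (subsum_eq completed_family_effect completed_family_sum1) => x y.
apply: cvgC_eventually_cst; exists k.+2 => n kn.
rewrite (eq_bigl (fun i => i == k.+1)) ?big_nat_eq1 // => i.
by rewrite in_set1E.
Qed.

Lemma completed_povm_pos : povm_fun completed_povm [set n | (0 < n)%N] = S.
Proof.
rewrite series_povmE.
apply: (subsum_eq completed_family_effect completed_family_sum1) => x y.
apply: cvgC_shift; apply: cvgC_ext (Ms_sum x y) => n.
rewrite [RHS]big_mkcond big_nat_recl //= in_set_predE /= add0r big_mkord.
by apply: eq_bigr => i _; rewrite in_set_predE.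
Qed.

End CompletedFamily.

Section Naturality.
Variable N : forall (d : measure_display) (X : measurableType d),
  povm H X -> probability X R.
Hypothesis N_natural : is_natural N.

Lemma natural_binary d (X : measurableType d) (mu : povm H X) E (mE : measurable E)
    (muE : is_effect (povm_fun mu E)) :
  N mu E = N (binary_povm muE) [set 0%N].
Proof.
pose f : X -> nat := fun w => if w \in E then 0%N else 1%N.
have preimE F : f @^-1` F = if 0%N \in F then (if 1%N \in F then setT else E)
                            else (if 1%N \in F then ~` E else set0).
  apply/seteqP; split => w; rewrite /f /preimage /=;
  case: (boolP (w \in E)) => wE; case: (boolP (0%N \in F)) => F0;
  case: (boolP (1%N \in F)) => F1 //=; move: wE F0 F1;
  rewrite ?in_setE ?notin_setE //=.
have mf : measurable_fun setT f.
  move=> _ Y _; rewrite setTI preimE.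
  by case: (0%N \in Y); case: (1%N \in Y) => //; exact: measurableC.
have pushE : povm_fun (binary_povm muE) = (fun F => povm_fun mu (f @^-1` F)).
  apply: funext => F; rewrite binary_povmE preimE; apply: op_inner_ext => x y.
  case: (0%N \in F); case: (1%N \in F) => /=.
  - by rewrite povm_setT /= addrC subrK.
  - by rewrite addr0.
  - by rewrite add0r innerBl povm_setC.
  - by rewrite povm_set0 /op0 addr0.
have := N_natural mf pushE.
move/(congr1 (fun P => P [set 0%N])) => /= ->.
by rewrite preimE in_set1E eqxx in_set1E.
Qed.

Definition effect_prob (A : H -> H) : R :=
  if pselect (is_effect A) is left A_effect
  then fine (N (binary_povm A_effect) [set 0%N]) else 0.

Lemma effect_probE d (X : measurableType d) (mu : povm H X) (E : set X) :
  measurable E -> (effect_prob (povm_fun mu E))%:E = N mu E.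
Proof.
move=> mE; rewrite /effect_prob; case: pselect => [muE|]; last first.
  by move/(_ (povm_effect mu mE)).
by rewrite (natural_binary mE muE) fineK //; exact: fin_num_measure.
Qed.

Lemma effect_prob_ge0_le1 A : is_effect A -> 0 <= effect_prob A <= 1.
Proof.
move=> A_effect; have m0 : measurable [set 0%N] by [].
have := effect_probE (binary_povm A_effect) m0; rewrite binary_povm0 => probE.
by rewrite -2!lee_fin probE measure_ge0 probability_le1.
Qed.

Lemma effect_prob_id : effect_prob id = 1.
Proof.
have := effect_probE (binary_povm effect_id) measurableT.
by rewrite povm_setT probability_setT => /(congr1 fine).
Qed.

Lemma effect_prob_sigma (Ms : nat -> H -> H) S :
  (forall n, is_effect (Ms n)) -> wot_sum Ms S -> is_effect S ->
  (fun n => \sum_(k < n) effect_prob (Ms k)) @ \oo --> effect_prob S.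
Proof.
move=> Ms_effect Ms_sum S_effect.
set Q := completed_povm Ms_effect Ms_sum S_effect.
have disj : trivIset setT (fun k : nat => [set k.+1]) by move=> i j _ _ [w [/= -> []]].
have cup : \bigcup_k [set k.+1] = [set n | (0 < n)%N].
  by apply/seteqP; split => [w [k _ ->] //|[//|w] _]; exists w.
have : (fun n => \sum_(0 <= k < n) N Q [set k.+1]) @ \oo --> N Q (\bigcup_k [set k.+1]).
  exact: measure_sigma_additive.
have -> : (fun n => \sum_(0 <= k < n) N Q [set k.+1]) =
          (fun n => (\sum_(0 <= k < n) effect_prob (Ms k))%:E).
  apply: funext => n; rewrite -sumEFin; apply: eq_bigr => k _.
  by rewrite -(effect_probE Q) // completed_povm_succ.
rewrite cup -(effect_probE Q) // completed_povm_pos.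
have -> : (fun n => \sum_(k < n) effect_prob (Ms k)) =
          (fun n => \sum_(0 <= k < n) effect_prob (Ms k)).
  by apply: funext => n; rewrite big_mkord.
by move/fine_cvg.
Qed.

End Naturality.

End Hilbert.
End EffectProbability.

Theorem mainTheorem2 (R : realType) (H : hilbert R)
  (N : forall (d : measure_display) (X : measurableType d),
      povm H X -> probability X R)
  (HN : is_natural N) :
  (* every effect arises as mu(E) for some POVM mu and event E *)
  (forall M : H -> H, is_effect M ->
     exists (d : measure_display) (X : measurableType d) (mu : povm H X) (E : set X),
       measurable E /\ povm_fun mu E = M) /\
  (* xi(M) := N_X(mu)(E) does not depend on the choice, and xi is a
     generalized probability measure *)
  (exists xi : (H -> H) -> R,
     (forall (d : measure_display) (X : measurableType d) (mu : povm H X) (E : set X),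
        measurable E -> ((xi (povm_fun mu E))%:E = N d X mu E)%E) /\
     is_gen_prob xi).
Proof.
split=> [A A_effect|].
  by exists _, nat, (binary_povm A_effect), [set 0%N]; rewrite binary_povm0.
exists (effect_prob N); split=> [d X mu E|]; first exact: effect_probE.
split; [exact: effect_prob_ge0_le1 | exact: effect_prob_id | exact: effect_prob_sigma].
Qed.
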